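(* In the setting below, for $1\le i,j\le r$ the block $N[i,j]$ of $N=\lim_{t\to\infty}(S+tP)^{-1}$ equals $$c_{ij}\begin{pmatrix}\mathbf{1}_{p_i}\mathbf{1}_{p_j}^\top&-\mathbf{1}_{p_i}\mathbf{1}_{q_j}^\top\\-\mathbf{1}_{q_i}\mathbf{1}_{p_j}^\top&\mathbf{1}_{q_i}\mathbf{1}_{q_j}^\top\end{pmatrix}$$ with $$c_{ii}=\frac{\ell}{\alpha(\alpha+\ell\gamma)(p_i+q_i)}\left(\frac\alpha\ell+\gamma-\frac{(p_i-q_i)^2}{p_i+q_i}\right),\qquad c_{ij}=\frac{-\ell}{\alpha(\alpha+\ell\gamma)}\cdot\frac{p_i-q_i}{p_i+q_i}\cdot\frac{p_j-q_j}{p_j+q_j}\ \ (j\ne i).$$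
   Context: Let $n\ge3$, $\ell>0$, $\alpha\ge(n-2)\ell$, $S=\alpha I_n+\ell\mathbf{1}_n\mathbf{1}_n^\top$. For a real matrix $P$, $\Delta_i(P)=|P_{ii}|-\sum_{j\ne i}|P_{ij}|$. A signless Laplacian is a real symmetric $n\times n$ matrix $P$ with $P_{ij}\in\{0,1\}$ for $i\ne j$, $P_{ii}\ge0$, and $\Delta_i(P)\in\{0,2\}$ for all $i$; its graph $G$ has vertex set $\{1,\dots,n\}$, an edge $\{i,j\}$ ($i\ne j$) whenever $P_{ij}=1$, and a self-loop $\{i,i\}$ whenever $\Delta_i(P)=2$ (graphs with self-loops are not bipartite). Let $G_1,\dots,G_r$ be the bipartite connected components of $G$, $G_i$ having bipartition classes of sizes $p_i$ and $q_i$; order the vertices of each $G_i$ with the $p_i$-class first. $N[i,j]$ denotes the submatrix of $N$ with rows indexed by vertices of $G_i$ and columns by vertices of $G_j$. $\gamma=\sum_{i=1}^r\frac{(p_i-q_i)^2}{p_i+q_i}$. *)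

From HB Require Import structures.
From mathcomp Require Import all_boot all_order all_algebra.
Set Implicit Arguments. Unset Strict Implicit. Unset Printing Implicit Defensive.
Import Order.TTheory GRing.Theory Num.Theory.
Local Open Scope ring_scope.

Section Defs.
Variable R : realFieldType.
Variable n : nat.

Definition Smat (alpha ell : R) : 'M[R]_n := alpha%:M + ell *: const_mx 1.

Definition Delta (P : 'M[R]_n) (i : 'I_n) : R :=
  `|P i i| - \sum_(j < n | j != i) `|P i j|.

Definition is_signless_laplacian (P : 'M[R]_n) : Prop :=
  [/\ P^T = P,
      (forall i j, i != j -> P i j = 0 \/ P i j = 1),
      (forall i, 0 <= P i i) &
      (forall i, Delta P i = 0 \/ Delta P i = 2)].

Definition sl_edge (P : 'M[R]_n) : rel 'I_n := fun u v => (u != v) && (P u v == 1).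
Definition sl_loop (P : 'M[R]_n) (u : 'I_n) : bool := Delta P u == 2.

Definition gcomp (P : 'M[R]_n) (u : 'I_n) : {set 'I_n} := [set v | connect (sl_edge P) u v].

Definition bip_set (P : 'M[R]_n) (C : {set 'I_n}) : bool :=
  [forall u in C, ~~ sl_loop P u] &&
  [exists f : {ffun 'I_n -> bool},
     [forall u in C, forall v in C, sl_edge P u v ==> (f u != f v)]].

Definition bip_comps (P : 'M[R]_n) : {set {set 'I_n}} :=
  [set C : {set 'I_n} | [exists u, C == gcomp P u] && bip_set P C].

(* col : a bipartition of every bipartite component; the p-class of a component
   is its set of vertices coloured true, the q-class those coloured false *)
Definition proper_bicol (P : 'M[R]_n) (col : 'I_n -> bool) : Prop :=
  forall u v, gcomp P u \in bip_comps P -> sl_edge P u v -> col u != col v.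

Definition pcnt (col : 'I_n -> bool) (C : {set 'I_n}) : R := (#|[set w in C | col w]|)%:R.
Definition qcnt (col : 'I_n -> bool) (C : {set 'I_n}) : R := (#|[set w in C | ~~ col w]|)%:R.

Definition gamma (P : 'M[R]_n) (col : 'I_n -> bool) : R :=
  \sum_(C in bip_comps P) (pcnt col C - qcnt col C) ^+ 2 / (pcnt col C + qcnt col C).

Definition coef (P : 'M[R]_n) (col : 'I_n -> bool) (alpha ell : R)
    (C D : {set 'I_n}) : R :=
  let g := gamma P col in
  let pC := pcnt col C in let qC := qcnt col C in
  let pD := pcnt col D in let qD := qcnt col D in
  if C == D then
    ell / (alpha * (alpha + ell * g) * (pC + qC)) *
      (alpha / ell + g - (pC - qC) ^+ 2 / (pC + qC))
  else
    - ell / (alpha * (alpha + ell * g)) * ((pC - qC) / (pC + qC)) *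
      ((pD - qD) / (pD + qD)).

(* sign pattern of the block: +1 on the p-class, -1 on the q-class *)
Definition sgn (col : 'I_n -> bool) (u : 'I_n) : R := if col u then 1 else -1.

End Defs.

Definition converges_to (R : realFieldType) (f : R -> R) (L : R) : Prop :=
  forall eps : R, 0 < eps -> exists T : R, forall t : R, T <= t -> `|f t - L| < eps.

From HB Require Import structures.
From mathcomp Require Import all_boot all_order all_algebra.
From mathcomp Require Import ring lra.
Set Implicit Arguments. Unset Strict Implicit. Unset Printing Implicit Defensive.
Import Order.TTheory GRing.Theory Num.Theory.
Local Open Scope ring_scope.

(* P is symmetric with nonnegative entries and nonnegative
   dominance Delta, so its quadratic form is a sum of nonnegative local terms
   and P is positive semidefinite; its kernel is spanned by the sign vectors
   of the colouring on the bipartite components.  Let Pi (proj_ker) be the orthogonal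
   projector onto ker P and h = Pi 1, so that gamma = 1^T h.  On ker P, the
   matrix S acts as alpha + ell h h^T, whose inverse is given by the
   Sherman-Morrison formula
       N = alpha^-1 Pi - ell / (alpha (alpha + ell gamma)) h h^T,
   and the entries of N are exactly the ones claimed.  A general perturbation
   argument concludes: if P N = 0, N S z = z on ker P (all matrices being
   symmetric), and the inverses of S + tP are uniformly bounded -- which
   holds since y^T (S + tP) y >= alpha |y|^2 -- then (S + tP)^-1 = N + O(1/t). *)

Section Vectors.
Variables (R : realFieldType) (n : nat).

Definition ones : 'cV[R]_n := const_mx 1.

Definition dotv (a b : 'cV[R]_n) : R := \sum_i a i 0 * b i 0.

Lemma dotvE (a b : 'cV[R]_n) : dotv a b = (a^T *m b) 0 0.
Proof. by rewrite mxE; apply: eq_bigr => i _; rewrite mxE. Qed.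

Lemma dotvDr (a b c : 'cV[R]_n) : dotv a (b + c) = dotv a b + dotv a c.
Proof. by rewrite /dotv -big_split; apply: eq_bigr => i _; rewrite mxE mulrDr. Qed.

Lemma dotvZr (x : R) (a b : 'cV[R]_n) : dotv a (x *: b) = x * dotv a b.
Proof. by rewrite /dotv mulr_sumr; apply: eq_bigr => i _; rewrite mxE mulrCA. Qed.

Lemma dotvC (a b : 'cV[R]_n) : dotv a b = dotv b a.
Proof. by apply: eq_bigr => i _; rewrite mulrC. Qed.

Definition qform (A : 'M[R]_n) (y : 'cV[R]_n) : R := dotv y (A *m y).

Definition sqnorm (y : 'cV[R]_n) : R := \sum_i y i 0 ^+ 2.

Lemma sqr_le_sqnorm (y : 'cV[R]_n) k : y k 0 ^+ 2 <= sqnorm y.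
Proof. by rewrite /sqnorm (bigD1 k) //= lerDl sumr_ge0 // => i _; rewrite sqr_ge0. Qed.

Lemma sqnorm_eq0 (y : 'cV[R]_n) : sqnorm y = 0 -> y = 0.
Proof.
move=> y0; apply/matrixP => k j; rewrite (ord1 j) mxE.
have /eqP := psumr_eq0P (fun i _ => sqr_ge0 (y i 0)) y0 (i := k) isT.
by rewrite sqrf_eq0 => /eqP.
Qed.

Lemma qform_ker (A : 'M[R]_n) y : A *m y = 0 -> qform A y = 0.
Proof. by move=> Ay; rewrite /qform Ay /dotv big1 // => i _; rewrite mxE mulr0. Qed.

End Vectors.
Arguments ones {R n}.

Section CoerciveMatrices.
Variables (R : realFieldType) (n : nat) (c : R) (A : 'M[R]_n).
Hypotheses (c_gt0 : 0 < c) (A_coercive : forall y, c * sqnorm y <= qform A y).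

Lemma coercive_unit : A \in unitmx.
Proof.
rewrite -unitmx_tr -row_free_unit -kermx_eq0; apply/eqP/row_matrixP => i.
set r := row i _; rewrite row0.
have rA : r *m A^T = 0 by apply/sub_kermxP; exact: row_sub.
have Ar : A *m r^T = 0 by rewrite -[A]trmxK -trmx_mul rA trmx0.
have r0 : sqnorm r^T = 0.
  apply/eqP; rewrite eq_le sumr_ge0 ?andbT => [|k _]; last exact: sqr_ge0.
  by rewrite -(pmulr_rle0 _ c_gt0) -(qform_ker Ar).
by rewrite -[r]trmxK (sqnorm_eq0 r0) trmx0.
Qed.

(* Column e of the inverse is the y with A y = e_e, so c |y|^2 <= y^T A y = y_e, *)
(* which forces c y_e <= 1 and then (c y_k)^2 <= 1.                             *)
Lemma coercive_inv_bound k e : `|invmx A k e| <= c^-1.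
Proof.
set y := matrix.col e (invmx A).
have Ay : A *m y = matrix.col e 1%:M.
  by rewrite /y !colE mulmxA (mulmxV coercive_unit).
have qy : qform A y = y e 0.
  rewrite /qform /dotv Ay (bigD1 e) //= big1 ?addr0; first by rewrite !mxE eqxx mulr1.
  by move=> i ie; rewrite !mxE (negbTE ie) mulr0.
have Acy : c * sqnorm y <= y e 0 by rewrite -qy A_coercive.
have ye : c * y e 0 ^+ 2 <= y e 0.
  by apply: le_trans Acy; rewrite ler_pM2l // sqr_le_sqnorm.
have yk : c * y k 0 ^+ 2 <= y e 0.
  by apply: le_trans Acy; rewrite ler_pM2l // sqr_le_sqnorm.
have ca : c * y e 0 <= 1.
  have [ye0|ye_gt0] := lerP (y e 0) 0.
    by rewrite (le_trans _ ler01) // pmulr_rle0.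
  by rewrite -(ler_pM2r ye_gt0) mul1r -mulrA -expr2.
have cb : (c * y k 0) ^+ 2 <= 1.
  by apply: le_trans ca; rewrite exprMn expr2 -mulrA ler_pM2l.
have -> : invmx A k e = (c * y k 0) * c^-1 by rewrite mxE mulrAC mulfV ?mul1r // gt_eqF.
have ci : 0 < c^-1 by rewrite invr_gt0.
move: cb ci; move: (c * y k 0) (c^-1) => b d cb ci.
rewrite normrM (gtr0_norm ci) ger_pMl // ler_norml; apply/andP; split; nra.
Qed.

End CoerciveMatrices.

Section PerturbedInverse.
Variables (R : realFieldType) (n : nat) (S P N : 'M[R]_n).

(* If N inverts S on ker P (all three matrices being symmetric), then the   *)
(* columns of 1 - S N lie in the column space of P: their transposes are     *)
(* annihilated by every kernel vector, i.e. by the cokernel of P.            *)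
Lemma kernel_factor : P^T = P -> S^T = S -> N^T = N ->
    (forall z : 'cV_n, P *m z = 0 -> N *m (S *m z) = z) ->
  exists W : 'M_n, 1%:M - S *m N = P *m W.
Proof.
move=> PT ST NT NSz.
have NSZ (Z : 'M_n) : P *m Z = 0 -> N *m (S *m Z) = Z.
  move=> PZ; apply/matrixP => i j.
  have Pzj : P *m matrix.col j Z = 0 by rewrite colE mulmxA PZ mul0mx.
  have colNS : N *m (S *m matrix.col j Z) = matrix.col j (N *m (S *m Z)).
    by rewrite !colE !mulmxA.
  by have := congr1 (fun z : 'cV_n => z i 0) (NSz _ Pzj); rewrite colNS !mxE.
have sub : ((1%:M - S *m N)^T <= P)%MS.
  rewrite submxE linearB /= trmx1 trmx_mul ST NT mulmxBl mul1mx -mulmxA.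
  by rewrite NSZ ?mulmx_coker ?subrr.
case/submxP: sub => D hD; exists D^T.
by rewrite -[LHS]trmxK hD trmx_mul PT.
Qed.

(* With 1 - S N = P W one gets (S + tP)^-1 - N = t^-1 (1 - (S + tP)^-1 S) W, *)
(* which tends to 0 as soon as the inverses are uniformly bounded.           *)
Lemma inverse_limit (W : 'M_n) (K : R) :
    P *m N = 0 -> 1%:M - S *m N = P *m W ->
    (forall t, 0 < t -> (S + t *: P) \in unitmx) ->
    (forall t, 0 < t -> forall i j, `|invmx (S + t *: P) i j| <= K) ->
  forall u v, converges_to (fun t => invmx (S + t *: P) u v) (N u v).
Proof.
move=> PN factor unitM boundM u v eps eps_gt0.
pose B := \sum_k (1 + \sum_j K * `|S j k|) * `|W k v|.
have B_ge0 : 0 <= B.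
  apply: sumr_ge0 => k _; rewrite mulr_ge0 // addr_ge0 // sumr_ge0 // => j _.
  by rewrite mulr_ge0 // (le_trans _ (boundM 1 ltr01 u u)).
exists ((B + 1) / eps) => t; rewrite ler_pdivrMr // => tB.
have t_gt0 : 0 < t.
  by rewrite -(pmulr_lgt0 _ eps_gt0) (lt_le_trans _ tB) // ltr_wpDl.
set M := S + t *: P.
have MN : M *m N = S *m N by rewrite mulmxDl -scalemxAl PN scaler0 addr0.
have invMP : invmx M *m P = t^-1 *: (1%:M - invmx M *m S).
  have h := mulVmx (unitM t t_gt0); rewrite /M mulmxDr -scalemxAr in h.
  by rewrite -h [X in X - _]addrC addrK scalerA mulVf ?scale1r // gt_eqF.
have errE : invmx M - N = t^-1 *: ((1%:M - invmx M *m S) *m W).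
  have -> : invmx M - N = invmx M *m (1%:M - M *m N).
    by rewrite mulmxBr mulmx1 mulKmx ?unitM.
  by rewrite MN factor mulmxA invMP -scalemxAl.
have errB : `|((1%:M - invmx M *m S) *m W) u v| <= B.
  rewrite mxE (le_trans (ler_norm_sum _ _ _)) // ler_sum // => k _.
  rewrite normrM ler_wpM2r // mxE (le_trans (ler_normD _ _)) // lerD //.
    by rewrite mxE; case: (u == k); rewrite ?normr1 ?normr0.
  rewrite mxE normrN mxE (le_trans (ler_norm_sum _ _ _)) // ler_sum // => j _.
  by rewrite normrM ler_wpM2r // boundM.
have -> : invmx M u v - N u v = (invmx M - N) u v by rewrite !mxE.
rewrite errE mxE normrM gtr0_norm ?invr_gt0 // mulrC ltr_pdivrMr //.
by rewrite (le_lt_trans errB) // mulrC (lt_le_trans _ tB) // ltrDl.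
Qed.

End PerturbedInverse.

Section ShiftedAllOnes.
Variables (R : realFieldType) (n : nat) (alpha ell : R).
Local Notation S := (@Smat R n alpha ell).

Lemma Smat_sym : S^T = S.
Proof. by apply/matrixP => i j; rewrite !mxE eq_sym. Qed.

Lemma Smat_mul (z : 'cV[R]_n) : S *m z = alpha *: z + (ell * dotv ones z) *: ones.
Proof.
apply/matrixP => k j; rewrite (ord1 j) !mxE mulr1 /dotv mulr_sumr.
rewrite (bigD1 k) //= [X in _ = _ + X](bigD1 k) //= addrA; congr (_ + _).
  by rewrite !mxE eqxx mulr1n mulr1 mul1r mulrDl.
by apply: eq_bigr => i ik; rewrite !mxE eq_sym (negbTE ik) mulr0n mulr1 mul1r add0r.
Qed.

Lemma Smat_qform (P : 'M[R]_n) t (y : 'cV[R]_n) : qform (S + t *: P) y =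
  alpha * sqnorm y + ell * dotv ones y ^+ 2 + t * qform P y.
Proof.
have -> : sqnorm y = dotv y y by apply: eq_bigr => i _; rewrite expr2.
rewrite /qform mulmxDl Smat_mul -scalemxAl !dotvDr !dotvZr (dotvC y ones).
by rewrite expr2 mulrA.
Qed.

Lemma Smat_coercive (P : 'M[R]_n) t : 0 <= ell -> 0 <= t ->
  (forall y, 0 <= qform P y) -> forall y, alpha * sqnorm y <= qform (S + t *: P) y.
Proof.
move=> ell_ge0 t_ge0 P_psd y; rewrite Smat_qform -addrA lerDl.
by rewrite addr_ge0 // mulr_ge0 // sqr_ge0.
Qed.

End ShiftedAllOnes.

Section DiagonallyDominant.
Variables (R : realFieldType) (n : nat) (P : 'M[R]_n).
Hypotheses (P_sym : P^T = P) (P_ge0 : forall u w, 0 <= P u w).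

Lemma DeltaE u : Delta P u = P u u - \sum_(w < n | w != u) P u w.
Proof.
rewrite /Delta ger0_norm //; congr (_ - _).
by apply: eq_bigr => w _; rewrite ger0_norm.
Qed.

Lemma P_symE u w : P u w = P w u.
Proof. by rewrite -{1}P_sym mxE. Qed.

Lemma qform_local (y : 'cV[R]_n) :
  2 * qform P y = \sum_u 2 * Delta P u * y u 0 ^+ 2 +
     \sum_u \sum_(w | w != u) P u w * (y u 0 + y w 0) ^+ 2.
Proof.
pose Y u := y u 0.
have split_diag : qform P y =
    \sum_u (P u u * Y u ^+ 2 + \sum_(w | w != u) P u w * Y u * Y w).
  rewrite /qform /dotv; apply: eq_bigr => u _.
  rewrite mxE (bigD1 u) //= mulrDr mulr_sumr.
  by congr (_ + _); [rewrite /Y; ring | apply: eq_bigr => w _; rewrite /Y; ring].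
have swap : \sum_u \sum_(w | w != u) P u w * Y w ^+ 2 =
            \sum_u \sum_(w | w != u) P u w * Y u ^+ 2.
  rewrite (exchange_big_dep xpredT) //=; apply: eq_bigr => u _.
  by apply: eq_big => w; [rewrite eq_sym | move=> _; rewrite P_symE].
have expand : \sum_u \sum_(w | w != u) P u w * (Y u + Y w) ^+ 2 =
    \sum_u \sum_(w | w != u) P u w * Y u ^+ 2
    + \sum_u \sum_(w | w != u) P u w * Y w ^+ 2
    + 2 * \sum_u \sum_(w | w != u) P u w * Y u * Y w.
  rewrite -big_split mulr_sumr -big_split /=; apply: eq_bigr => u _.
  by rewrite -big_split mulr_sumr -big_split /=; apply: eq_bigr => w _; ring.
have diag : \sum_u 2 * Delta P u * y u 0 ^+ 2 = 2 * \sum_u P u u * Y u ^+ 2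
    - 2 * \sum_u \sum_(w | w != u) P u w * Y u ^+ 2.
  rewrite !mulr_sumr -sumrB; apply: eq_bigr => u _.
  by rewrite DeltaE -mulr_suml /Y; ring.
by rewrite split_diag expand swap diag big_split /=; ring.
Qed.

Hypothesis Delta_ge0 : forall u, 0 <= Delta P u.

(* Under diagonal dominance all local terms are nonnegative, hence P >= 0. *)
Lemma vertex_term_ge0 (y : 'cV[R]_n) u : 0 <= 2 * Delta P u * y u 0 ^+ 2.
Proof. by rewrite mulr_ge0 ?sqr_ge0 // mulr_ge0. Qed.

Lemma pair_terms_ge0 (y : 'cV[R]_n) u :
  0 <= \sum_(w | w != u) P u w * (y u 0 + y w 0) ^+ 2.
Proof. by apply: sumr_ge0 => w _; rewrite mulr_ge0 ?sqr_ge0. Qed.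

Lemma qform_ge0 (y : 'cV[R]_n) : 0 <= qform P y.
Proof.
rewrite -(pmulr_rge0 _ (ltr0Sn R 1)) qform_local.
by rewrite addr_ge0 ?sumr_ge0 // => u _; rewrite ?vertex_term_ge0 ?pair_terms_ge0.
Qed.

Lemma kernel_local (y : 'cV[R]_n) : P *m y = 0 ->
  (forall u, Delta P u * y u 0 ^+ 2 = 0) /\
  (forall u w, u != w -> P u w * (y u 0 + y w 0) ^+ 2 = 0).
Proof.
move=> Py; have := qform_local y; rewrite qform_ker // mulr0 => /esym /eqP.
rewrite paddr_eq0 ?sumr_ge0 // => [/andP [/eqP vert0 /eqP pairs0]|u _|u _];
  rewrite ?vertex_term_ge0 ?pair_terms_ge0 //.
split=> [u | u w uw].
  have /eqP := psumr_eq0P (fun v _ => vertex_term_ge0 y v) vert0 (i := u) isT.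
  by rewrite -mulrA mulf_eq0 pnatr_eq0 => /eqP.
have := psumr_eq0P (fun v _ => pair_terms_ge0 y v) pairs0 (i := u) isT.
move/psumr_eq0P; apply; last by rewrite eq_sym.
by move=> x _; rewrite mulr_ge0 ?sqr_ge0.
Qed.

End DiagonallyDominant.

Section SignlessLaplacian.
Variables (R : realFieldType) (n : nat) (P : 'M[R]_n) (col : 'I_n -> bool).
Hypotheses (P_sl : is_signless_laplacian P) (col_proper : proper_bicol P col).

Local Notation comp := (gcomp P).
Local Notation bip u := (gcomp P u \in bip_comps P).
Local Notation s := (sgn R col).

Lemma sl_sym : P^T = P.
Proof. by case: P_sl. Qed.

Lemma sl_offdiag u w : u != w -> P u w = 0 \/ P u w = 1.
Proof. by case: P_sl => _ h _ _; apply: h. Qed.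

Lemma sl_ge0 u w : 0 <= P u w.
Proof.
have [->|uw] := eqVneq u w; first by case: P_sl.
by case: (sl_offdiag uw) => ->.
Qed.

Lemma sl_Delta u : Delta P u = 0 \/ Delta P u = 2.
Proof. by case: P_sl. Qed.

Lemma sl_Delta_ge0 u : 0 <= Delta P u.
Proof. by case: (sl_Delta u) => ->. Qed.

Lemma sl_edge_sym : symmetric (sl_edge P).
Proof. by move=> u w; rewrite /sl_edge eq_sym (P_symE sl_sym). Qed.

Lemma in_comp u : u \in comp u.
Proof. by rewrite inE connect0. Qed.

Lemma mem_comp u w : w \in comp u -> comp w = comp u.
Proof.
rewrite inE => cuw; apply/setP => x; rewrite !inE.
have csym := sym_connect_sym sl_edge_sym.
by apply/idP/idP => h; apply: connect_trans h; rewrite // csym.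
Qed.

Lemma edge_comp u w : sl_edge P u w -> comp w = comp u.
Proof. by move=> e; apply: mem_comp; rewrite inE connect1. Qed.

Lemma bipE u : bip u = bip_set P (comp u).
Proof.
rewrite inE; case: (bip_set _ _); rewrite ?andbT ?andbF //.
by apply/existsP; exists u.
Qed.

Lemma bip_comps_comp D : D \in bip_comps P -> exists x, D = comp x.
Proof. by rewrite inE => /andP [/existsP [x /eqP ->] _]; exists x. Qed.

Lemma sgnK u : s u * s u = 1.
Proof. by rewrite /sgn; case: (col u); rewrite ?mulr1 ?mulrNN ?mulr1. Qed.

Lemma sgn_edge u w : bip u -> sl_edge P u w -> s w = - s u.
Proof.
move=> bu e; have := col_proper bu e; rewrite /sgn.
by case: (col u); case: (col w); rewrite ?opprK.
Qed.

(* Bipartite components carry no self-loop, so Delta vanishes there. *)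
Lemma bip_noloop u : bip u -> Delta P u = 0.
Proof.
rewrite bipE => /andP [/forall_inP noloop _].
have := noloop u (in_comp u); rewrite /sl_loop.
by case: (sl_Delta u) => ->; rewrite ?eqxx.
Qed.

Definition signed_vec (a : {set 'I_n} -> R) : 'cV[R]_n :=
  \col_u (if bip u then a (comp u) * s u else 0).

(* Signed vectors lie in the kernel: at a vertex u of a bipartite component *)
(* the neighbours contribute -(sum of the P u w) * y u, cancelled by P u u.  *)
Lemma P_signed_vec (a : {set 'I_n} -> R) : P *m signed_vec a = 0.
Proof.
apply/matrixP => u j; rewrite (ord1 j) !mxE (bigD1 u) //= mxE.
have edgeE w : w != u -> P u w != 0 -> sl_edge P u w.
  move=> wu Puw; have uw : u != w by rewrite eq_sym.
  by rewrite /sl_edge uw; case: (sl_offdiag uw) Puw => ->; rewrite ?eqxx.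
case bu: (bip u); last first.
  rewrite mulr0 add0r big1 // => w wu; rewrite mxE.
  have [->|Puw] := eqVneq (P u w) 0; first by rewrite mul0r.
  by rewrite (edge_comp (edgeE w wu Puw)) bu mulr0.
rewrite (eq_bigr (fun w => - (P u w * (a (comp u) * s u)))) => [|w wu].
  by rewrite sumrN -mulr_suml -mulrBl -(DeltaE sl_ge0) bip_noloop ?mul0r.
rewrite mxE; have [->|Puw] := eqVneq (P u w) 0; first by rewrite !mul0r oppr0.
have e := edgeE w wu Puw.
by rewrite (edge_comp e) bu (sgn_edge bu e) !mulrN.
Qed.

Lemma comp_const (f : 'I_n -> R) u :
  (forall x z, x \in comp u -> sl_edge P x z -> f z = f x) ->
  forall w, w \in comp u -> f w = f u.
Proof.
move=> f_edge w; rewrite inE => /connectP [p pth ->].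
elim: p u pth f_edge => [//|z p IH] x /= /andP [exz pz] f_edge.
have zx : comp z = comp x by rewrite (edge_comp exz).
rewrite (IH z pz) ?(f_edge x z) ?in_comp // => y y' yz; apply: f_edge.
by rewrite -zx.
Qed.

Lemma kernel_edge (y : 'cV[R]_n) u w : P *m y = 0 -> sl_edge P u w -> y w 0 = - y u 0.
Proof.
move=> Py /andP [uw /eqP Puw].
have [_ pair0] := kernel_local sl_sym sl_ge0 sl_Delta_ge0 Py.
have /eqP := pair0 u w uw; rewrite Puw mul1r sqrf_eq0 addrC addr_eq0.
by move/eqP.
Qed.

Lemma kernel_loop (y : 'cV[R]_n) u : P *m y = 0 -> sl_loop P u -> y u 0 = 0.
Proof.
move=> Py /eqP loop; have [vert0 _] := kernel_local sl_sym sl_ge0 sl_Delta_ge0 Py.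
have /eqP := vert0 u; rewrite loop mulf_eq0 pnatr_eq0 /= sqrf_eq0.
by move/eqP.
Qed.

Definition comp_coef (y : 'cV[R]_n) (C : {set 'I_n}) : R :=
  oapp (fun r => y r 0 * s r) 0 [pick r in C].

(* The kernel of P consists exactly of the signed vectors: a kernel vector *)
(* alternates in sign along edges, and vanishes on non-bipartite components *)
(* (at a self-loop, or where an odd cycle forces y = -y).                   *)
Lemma kernel_signed_vec (y : 'cV[R]_n) : P *m y = 0 -> y = signed_vec (comp_coef y).
Proof.
move=> Py; apply/matrixP => u j; rewrite (ord1 j) mxE.
case bu: (bip u).
  rewrite /comp_coef; case: pickP => [r rC | /(_ u)]; last by rewrite in_comp.
  rewrite /= (@comp_const (fun x => y x 0 * s x) u) //.
    by rewrite -mulrA sgnK mulr1.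
  move=> x z xC e; have bx : bip x by rewrite (mem_comp xC) bu.
  by rewrite (kernel_edge Py e) (sgn_edge bx e) mulrNN.
have sq_const : forall w, w \in comp u -> y w 0 ^+ 2 = y u 0 ^+ 2.
  by apply: comp_const => x z _ e; rewrite (kernel_edge Py e) sqrrN.
have y0 w : w \in comp u -> y w 0 = 0 -> y u 0 = 0.
  by move=> wC /eqP; rewrite -sqrf_eq0 sq_const // sqrf_eq0 => /eqP.
move: bu; rewrite bipE /bip_set.
case: (boolP [forall x in comp u, ~~ sl_loop P x]) => /= [noloop | /forall_inPn [x xC]].
  move/negbT => not2col; apply/eqP; apply: contraT => yu0.
  case/negP: not2col; apply/existsP; exists [ffun x => 0 < y x 0].
  apply/forall_inP => x xC; apply/forall_inP => z zC; apply/implyP => e.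
  rewrite !ffunE (kernel_edge Py e) oppr_gt0.
  have : y x 0 != 0 by apply: contra yu0 => /eqP /(y0 x xC) ->.
  by case: ltrgtP.
by rewrite negbK => loop _; apply: (y0 x xC); apply: kernel_loop.
Qed.

Definition csize (C : {set 'I_n}) : R := pcnt R col C + qcnt R col C.
Definition cbal (C : {set 'I_n}) : R := pcnt R col C - qcnt R col C.

Lemma csize_card (C : {set 'I_n}) : csize C = #|C|%:R.
Proof.
have pE : [set w in C | col w] = C :&: [set w | col w].
  by apply/setP => w; rewrite !inE.
have qE : [set w in C | ~~ col w] = C :\: [set w | col w].
  by apply/setP => w; rewrite !inE andbC.
by rewrite /csize /pcnt /qcnt pE qE -natrD cardsID.
Qed.

Lemma sum_sgn (C : {set 'I_n}) : \sum_(k in C) s k = cbal C.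
Proof.
rewrite (bigID col) /= /cbal /pcnt /qcnt -!sumr_const -sumrN.
congr (_ + _); apply: eq_big => k; rewrite ?inE // => /andP [_ ck].
  by rewrite /sgn ck.
by rewrite /sgn (negbTE ck).
Qed.

Lemma csize_gt0 (C : {set 'I_n}) : C \in bip_comps P -> 0 < csize C.
Proof.
case/bip_comps_comp => x ->; rewrite csize_card ltr0n card_gt0.
by apply/set0Pn; exists x; apply: in_comp.
Qed.

Lemma comp_eqE u w : (comp w == comp u) = (w \in comp u).
Proof. by apply/eqP/idP => [<-|/mem_comp //]; apply: in_comp. Qed.

Lemma sum_bip_comps (F : {set 'I_n} -> 'I_n -> R) :
  \sum_k (if bip k then F (comp k) k else 0) =
  \sum_(D in bip_comps P) \sum_(k in D) F D k.
Proof.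
rewrite -big_mkcond /=.
rewrite (partition_big (fun k => comp k) (fun D => D \in bip_comps P)) //=.
apply: eq_bigr => D bD; have [x Dx] := bip_comps_comp bD.
apply: eq_big => k; last by case/andP => _ /eqP ->.
apply/andP/idP => [[_ /eqP <-]|kD]; first exact: in_comp.
have kx : comp k = D by rewrite Dx (@mem_comp x) // -Dx.
by rewrite kx bD.
Qed.

Definition proj_ker : 'M[R]_n := \matrix_(u, w)
  (if bip u && (comp w == comp u) then s u * s w / csize (comp u) else 0).

Lemma proj_ker_row u (f : 'I_n -> R) : \sum_w proj_ker u w * f w =
  if bip u then s u / csize (comp u) * \sum_(w in comp u) s w * f w else 0.
Proof.
case bu: (bip u); last by rewrite big1 // => w _; rewrite mxE bu mul0r.
rewrite (bigID (fun w => w \in comp u)) /= [X in _ + X]big1 ?addr0 => [|w /negbTE wC].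
  by rewrite mulr_sumr; apply: eq_bigr => w wC; rewrite mxE bu comp_eqE wC /=; ring.
by rewrite mxE bu comp_eqE wC mul0r.
Qed.

Lemma proj_ker_sym : proj_ker^T = proj_ker.
Proof.
apply/matrixP => u w; rewrite !mxE.
have [uw|_] := eqVneq (comp w) (comp u); last by rewrite !andbF.
by rewrite -uw !andbT [s w * _]mulrC.
Qed.

Lemma proj_ker_signed_vec (a : {set 'I_n} -> R) :
  proj_ker *m signed_vec a = signed_vec a.
Proof.
apply/matrixP => u j; rewrite (ord1 j) mxE [RHS]mxE.
rewrite (proj_ker_row u (fun w => signed_vec a w 0)).
case bu: (bip u) => //.
have sv_comp w : w \in comp u -> s w * signed_vec a w 0 = a (comp u).
  by move=> wC; rewrite mxE (mem_comp wC) bu mulrCA sgnK mulr1.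
rewrite (eq_bigr _ sv_comp).
rewrite sumr_const -mulr_natr -csize_card; field.
by rewrite gt_eqF // csize_gt0.
Qed.

Lemma proj_ker_fix (y : 'cV[R]_n) : P *m y = 0 -> proj_ker *m y = y.
Proof. by move/kernel_signed_vec => ->; apply: proj_ker_signed_vec. Qed.

(* Each column of proj_ker is a signed vector, hence lies in the kernel of P. *)
Lemma P_proj_ker : P *m proj_ker = 0.
Proof.
apply/matrixP => u w; rewrite [RHS]mxE.
pose a C : R := if C == comp w then s w / csize C else 0.
have colw : matrix.col w proj_ker = signed_vec a.
  apply/matrixP => k j; rewrite !mxE /a eq_sym.
  by case: (bip k); case: (comp k == comp w); rewrite /= ?mul0r //; ring.
have -> : (P *m proj_ker) u w = (P *m matrix.col w proj_ker) u 0.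
  by rewrite colE mulmxA -colE [RHS]mxE.
by rewrite colw P_signed_vec mxE.
Qed.

Definition proj_ones : 'cV[R]_n := proj_ker *m ones.

Lemma proj_onesE u :
  proj_ones u 0 = if bip u then s u * (cbal (comp u) / csize (comp u)) else 0.
Proof.
rewrite mxE (proj_ker_row u (fun w => ones w 0)); case: (bip u) => //.
rewrite (eq_bigr s) => [|w _]; last by rewrite mxE mulr1.
by rewrite sum_sgn mulrAC mulrA.
Qed.

(* gamma is the squared length of the projection of the all-ones vector. *)
Lemma dot_ones_proj_ones : dotv ones proj_ones = gamma P col.
Proof.
rewrite /dotv (eq_bigr (fun u => if bip u then s u * (cbal (comp u) / csize (comp u))
  else 0)) => [|u _]; last by rewrite [ones u 0]mxE mul1r proj_onesE.
rewrite (sum_bip_comps (fun D k => s k * (cbal D / csize D))).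
apply: eq_bigr => D _; rewrite -mulr_suml sum_sgn /cbal /csize.
by rewrite expr2 mulrA.
Qed.

Lemma gamma_ge0 : 0 <= gamma P col.
Proof.
apply: sumr_ge0 => D bD; rewrite mulr_ge0 ?sqr_ge0 // invr_ge0 ltW //.
exact: csize_gt0.
Qed.

Variables (alpha ell : R).

Definition kappa : R := ell / (alpha * (alpha + ell * gamma P col)).

(* The claimed limit: the inverse of the compression of S to the kernel of P, *)
(* computed by the Sherman-Morrison formula.                                 *)
Definition Nlim : 'M[R]_n := alpha^-1 *: proj_ker - kappa *: (proj_ones *m proj_ones^T).

Lemma Nlim_sym : Nlim^T = Nlim.
Proof. by rewrite /Nlim linearB !linearZ /= trmx_mul trmxK proj_ker_sym. Qed.

Lemma P_Nlim : P *m Nlim = 0.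
Proof.
rewrite /Nlim mulmxBr -!scalemxAr mulmxA /proj_ones mulmxA P_proj_ker.
by rewrite !mul0mx !scaler0 subr0.
Qed.

Lemma Nlim_mul (y : 'cV[R]_n) :
  Nlim *m y = alpha^-1 *: (proj_ker *m y) - (kappa * dotv proj_ones y) *: proj_ones.
Proof.
rewrite /Nlim mulmxBl -!scalemxAl -mulmxA (mx11_scalar (proj_ones^T *m y)) -dotvE.
by rewrite mul_mx_scalar scalerA.
Qed.

Hypotheses (alpha_gt0 : 0 < alpha) (ell_gt0 : 0 < ell).

Lemma alpha_gamma_gt0 : 0 < alpha + ell * gamma P col.
Proof. by rewrite ltr_wpDr // mulr_ge0 ?gamma_ge0 ?ltW. Qed.

(* Nlim inverts S on the kernel of P: for z = proj_ker z one has            *)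
(* S z = alpha z + ell (1 . z) 1, h . z = 1 . z and h . 1 = gamma, and the  *)
(* rank-one corrections cancel.                                            *)
Lemma Nlim_inverts (z : 'cV[R]_n) :
  P *m z = 0 -> Nlim *m (@Smat R n alpha ell *m z) = z.
Proof.
move=> Pz; have proj_z := proj_ker_fix Pz.
have hz : dotv proj_ones z = dotv ones z.
  by rewrite !dotvE /proj_ones trmx_mul proj_ker_sym -mulmxA proj_z.
rewrite Smat_mul Nlim_mul mulmxDr -!scalemxAr proj_z -/proj_ones dotvDr !dotvZr hz.
rewrite (dotvC proj_ones) dot_ones_proj_ones.
rewrite scalerDr scalerA mulVf ?gt_eqF // scale1r -addrA.
rewrite scalerA -scalerBl [X in _ + X](_ : _ = 0) ?addr0 // /kappa.
have ag := alpha_gamma_gt0.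
by rewrite [X in X *: _](_ : _ = 0) ?scale0r //; field; rewrite !gt_eqF.
Qed.

Lemma NlimE u v : bip u -> bip v ->
  Nlim u v = coef P col alpha ell (comp u) (comp v) * s u * s v.
Proof.
move=> bu bv.
have hh : (proj_ones *m proj_ones^T) u v = proj_ones u 0 * proj_ones v 0.
  by rewrite [LHS]mxE big_ord1 [proj_ones^T 0 v]mxE.
have -> : Nlim u v = alpha^-1 * proj_ker u v - kappa * (proj_ones u 0 * proj_ones v 0).
  by rewrite -hh /Nlim !mxE.
rewrite proj_onesE bu proj_onesE bv mxE bu /coef.
have mu := csize_gt0 bu; have mv := csize_gt0 bv; have ag := alpha_gamma_gt0.
rewrite -/(csize (comp u)) -/(cbal (comp u)) -/(csize (comp v)) -/(cbal (comp v)).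
rewrite -/(gamma P col) -/kappa /kappa eq_sym.
case: eqP => [uv|_]; last by rewrite /=; field; rewrite !gt_eqF.
by rewrite uv /=; field; rewrite !gt_eqF.
Qed.
End SignlessLaplacian.

(* The corollary: N = Nlim satisfies the hypotheses of inverse_limit, the bound *)
(* on the inverses coming from the alpha-coercivity of S + tP; alpha > 0 follows *)
(* from alpha >= (n - 2) ell with n >= 3.                                       *)
Theorem corollary4p9 (R : realFieldType) (n : nat) (ell alpha : R)
    (P : 'M[R]_n) (col : 'I_n -> bool) :
  (3 <= n)%N -> 0 < ell -> (n - 2)%:R * ell <= alpha ->
  is_signless_laplacian P ->
  proper_bicol P col ->
  forall u v : 'I_n,
    gcomp P u \in bip_comps P -> gcomp P v \in bip_comps P ->
    converges_to (fun t : R => invmx (@Smat R n alpha ell + t *: P) u v)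
      (coef P col alpha ell (gcomp P u) (gcomp P v) * sgn R col u * sgn R col v).
Proof.
move=> n_ge3 ell_gt0 alpha_ge P_sl col_proper u v bu bv.
have alpha_gt0 : 0 < alpha.
  rewrite (lt_le_trans _ alpha_ge) // pmulr_rgt0 //.
  by rewrite ltr0n subn_gt0 (leq_trans _ n_ge3).
have P_psd := qform_ge0 (sl_sym P_sl) (sl_ge0 P_sl) (sl_Delta_ge0 P_sl).
have coercive t :
    0 < t -> forall y, alpha * sqnorm y <= qform (Smat n alpha ell + t *: P) y.
  by move=> t_gt0; apply: Smat_coercive; rewrite ?ltW.
have [W factorW] := kernel_factor (sl_sym P_sl) (Smat_sym n alpha ell)
  (Nlim_sym P col alpha ell) (Nlim_inverts P_sl col_proper alpha_gt0 ell_gt0).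
rewrite -(NlimE col P_sl alpha_gt0 ell_gt0 bu bv).
apply: (inverse_limit (P_Nlim P_sl col_proper alpha ell) factorW) => t t_gt0.
  exact: coercive_unit alpha_gt0 (coercive t t_gt0).
exact: coercive_inv_bound alpha_gt0 (coercive t t_gt0).
Qed.
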